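(* Let $x_0<\dots<x_n$ and $\hat x_0<\dots<\hat x_n$ be real numbers with $\hat x_0=x_0$, $\hat x_n=x_n$, let $z_k=z_k(\mathbf{x},\hat{\mathbf{x}})$, $\hat c_k:=(\hat x_{k-1}+\hat x_k)/2$, and for $1\le k\le n$, $0\le j\le n$ let $a_{k,j}:=(z_j-P_{\mathbf{z}}(\hat c_k))\,\ell_j(\hat c_k)$. Let $L\ge0$ and let $\mathbf{y}\in\mathbb{R}^{n+1}$ satisfy $|y_j-y_{j-1}|\le L(\hat x_j-\hat x_{j-1})$ for $1\le j\le n$. Then for each $1\le k\le n$, \[ |E(\hat c_k;\mathbf{y},\mathbf{z})|\le L\sum_{i=1}^n(\hat x_i-\hat x_{i-1})\Bigl|\sum_{j=i}^n a_{k,j}\Bigr|. \]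
   Context: $\lambda_k(\mathbf{x}):=1/\prod_{j\neq k}(x_k-x_j)$; $z_k(\mathbf{x},\hat{\mathbf{x}}):=(\lambda_k(\mathbf{x})-\lambda_k(\hat{\mathbf{x}}))/\lambda_k(\hat{\mathbf{x}})$. $\ell_j$ is the $j$-th Lagrange polynomial for the nodes $\hat{\mathbf{x}}$. For $\mathbf{v}\in\mathbb{R}^{n+1}$, $P_{\mathbf{v}}$ is the polynomial of degree $\le n$ with $P_{\mathbf{v}}(\hat x_k)=v_k$; $E(t;\mathbf{y},\mathbf{z}):=P_{\mathbf{y}\mathbf{z}}(t)-P_{\mathbf{y}}(t)P_{\mathbf{z}}(t)$ with $(\mathbf{yz})_k=y_kz_k$. *)

From mathcomp Require Import all_boot all_order all_algebra.
Set Implicit Arguments. Unset Strict Implicit. Unset Printing Implicit Defensive.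
Import Order.TTheory GRing.Theory Num.Theory.
Local Open Scope ring_scope.

Definition lam (R : fieldType) (n : nat) (x : 'I_n.+1 -> R) (k : 'I_n.+1) : R :=
  (\prod_(j < n.+1 | j != k) (x k - x j))^-1.

Definition zk (R : fieldType) (n : nat) (x xh : 'I_n.+1 -> R) (k : 'I_n.+1) : R :=
  (lam x k - lam xh k) / lam xh k.

Definition lagr (R : fieldType) (n : nat) (xh : 'I_n.+1 -> R) (j : 'I_n.+1) (t : R) : R :=
  \prod_(m < n.+1 | m != j) ((t - xh m) / (xh j - xh m)).

Definition Pint (R : fieldType) (n : nat) (xh : 'I_n.+1 -> R) (v : 'I_n.+1 -> R) (t : R) : R :=
  \sum_(j < n.+1) v j * lagr xh j t.

Definition Eerr (R : fieldType) (n : nat) (xh : 'I_n.+1 -> R) (y z : 'I_n.+1 -> R) (t : R) : R :=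
  Pint xh (fun k => y k * z k) t - Pint xh y t * Pint xh z t.

From mathcomp Require Import all_boot all_order all_algebra.
From mathcomp Require Import ring.
Import Order.TTheory GRing.Theory Num.Theory.
Local Open Scope ring_scope.

(* The Lagrange basis is a partition of unity, so E(t; y, z) = sum_j y_j a_j
   with sum_j a_j = 0.  Abel summation rewrites this as
   sum_(i >= 1) (y_i - y_(i-1)) sum_(j >= i) a_j, and the Lipschitz bound on y
   finishes. *)

Section LagrangeBasis.
Variables (R : fieldType) (n : nat) (xh : 'I_n.+1 -> R).
Hypothesis xh_inj : injective xh.

Lemma lagrE j t : lagr xh j t = lam xh j * \prod_(m < n.+1 | m != j) (t - xh m).
Proof. by rewrite /lagr /lam big_split /= prodfV mulrC. Qed.

Definition lagr_poly j : {poly R} :=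
  lam xh j *: \prod_(m < n.+1 | m != j) ('X - (xh m)%:P).

Lemma horner_lagr_poly j t : (lagr_poly j).[t] = lagr xh j t.
Proof.
rewrite lagrE hornerZ horner_prod; congr (_ * _).
by apply: eq_bigr => m _; rewrite hornerXsubC.
Qed.

Lemma size_lagr_poly j : (size (lagr_poly j) <= n.+1)%N.
Proof.
apply: leq_trans (size_scale_leq _ _) _.
apply: leq_trans (size_poly_prod_leq _ _) _.
rewrite (eq_bigr (fun _ => 2%N)) => [|m _]; last by rewrite size_XsubC.
by rewrite sum_nat_const cardC1 card_ord muln2 -addnn -addSn addnK.
Qed.

Lemma lagr_node j k : lagr xh j (xh k) = (j == k)%:R.
Proof.
rewrite /lagr; have [<-|/negbTE jk] := eqVneq j k.
  by rewrite big1 // => m mj; rewrite divff // subr_eq0 (inj_eq xh_inj) eq_sym.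
by rewrite (bigD1 k) 1?eq_sym ?jk //= subrr mul0r mul0r.
Qed.

(* The polynomial [\sum_j lagr_poly j - 1] has degree at most n and vanishes
   at the n + 1 distinct nodes. *)
Lemma sum_lagr t : \sum_(j < n.+1) lagr xh j t = 1.
Proof.
pose q := \sum_(j < n.+1) lagr_poly j - 1.
have qE u : q.[u] = \sum_(j < n.+1) lagr xh j u - 1.
  by rewrite hornerD hornerN hornerC horner_sum; under eq_bigr do rewrite horner_lagr_poly.
suff q0 : q = 0 by apply/eqP; rewrite -subr_eq0 -qE q0 horner0.
apply: (@roots_geq_poly_eq0 _ q [seq xh i | i <- enum 'I_n.+1]).
- apply/allP => _ /mapP[i _ ->]; rewrite /root qE (bigD1 i) //= big1.
    by rewrite lagr_node eqxx addr0 subrr.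
  by move=> j /negbTE ji; rewrite lagr_node ji.
- by rewrite map_inj_uniq // enum_uniq.
- rewrite size_map size_enum_ord /q.
  apply: leq_trans (size_polyD _ _) _; rewrite size_polyN size_poly1 geq_max andbT.
  apply: leq_trans (size_sum _ _ _) _.
  by apply/bigmax_leqP => j _; apply: size_lagr_poly.
Qed.

End LagrangeBasis.

Lemma Eerr_sum (R : fieldType) n (xh y z : 'I_n.+1 -> R) t :
  Eerr xh y z t = \sum_(j < n.+1) y j * ((z j - Pint xh z t) * lagr xh j t).
Proof.
rewrite /Eerr; set P := Pint xh z t; rewrite /Pint mulr_suml -sumrB.
by apply: eq_bigr => j _; ring.
Qed.

Lemma sum_residual_lagr (R : fieldType) n (xh z : 'I_n.+1 -> R) t :
  injective xh -> \sum_(j < n.+1) (z j - Pint xh z t) * lagr xh j t = 0.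
Proof.
move=> xh_inj; under eq_bigr do rewrite mulrBl.
by rewrite sumrB -mulr_sumr sum_lagr // mulr1 subrr.
Qed.

Lemma telescope_sumr_pos (R : zmodType) (Y : nat -> R) N :
  \sum_(0 <= i < N.+1 | (0 < i)%N) (Y i - Y i.-1) = Y N - Y 0%N.
Proof. by rewrite big_ltn_cond //= big_add1 /=; apply: telescope_sumr. Qed.

Lemma abel_sum_nat (R : pzRingType) (Y A : nat -> R) N :
  \sum_(0 <= i < N | (0 < i)%N) (Y i - Y i.-1) * \sum_(0 <= j < N | (i <= j)%N) A j
  = \sum_(0 <= j < N) (Y j - Y 0%N) * A j.
Proof.
under eq_bigr do rewrite big_distrr.
rewrite (exchange_big_dep_nat predT) //= big_nat [RHS]big_nat.
apply: eq_bigr => j /andP[_ ltjN].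
by rewrite -big_distrl /= -telescope_sumr_pos (big_nat_widen _ _ _ _ _ ltjN).
Qed.

Lemma abel_sum (R : pzRingType) n (Y A : 'I_n.+1 -> R) :
  \sum_(i < n.+1 | (0 < i)%N) (Y i - Y (inord i.-1)) * \sum_(j < n.+1 | (i <= j)%N) A j
  = \sum_(j < n.+1) (Y j - Y ord0) * A j.
Proof.
have inord0 : inord 0 = ord0 :> 'I_n.+1 by apply: val_inj; rewrite /= inordK.
have := @abel_sum_nat _ (Y \o inord) (A \o inord) n.+1.
rewrite !big_mkord /= inord0; under eq_bigr do rewrite big_mkord.
move=> eq_nat; apply: etrans (etrans _ eq_nat) _; apply: eq_bigr => i _.
  by congr (_ * _); [rewrite inord_val | apply: eq_bigr => j _; rewrite inord_val].
by rewrite inord_val.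
Qed.

Lemma norm_sum_le_abel (R : numDomainType) n (Y A D : 'I_n.+1 -> R) :
  \sum_(j < n.+1) A j = 0 ->
  (forall i : 'I_n.+1, (0 < i)%N -> `|Y i - Y (inord i.-1)| <= D i) ->
  `|\sum_(j < n.+1) Y j * A j| <=
    \sum_(i < n.+1 | (0 < i)%N) D i * `|\sum_(j < n.+1 | (i <= j)%N) A j|.
Proof.
move=> sumA0 dY_le.
have -> : \sum_(j < n.+1) Y j * A j = \sum_(j < n.+1) (Y j - Y ord0) * A j.
  under [RHS]eq_bigr do rewrite mulrBl.
  by rewrite sumrB -mulr_sumr sumA0 mulr0 subr0.
rewrite -abel_sum; apply: le_trans (ler_norm_sum _ _ _) _.
apply: ler_sum => i i_gt0; rewrite normrM.
by apply: ler_wpM2r; [exact: normr_ge0 | exact: dY_le].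
Qed.

Theorem lemma4 (R : realFieldType) (n : nat) (x xh y : 'I_n.+1 -> R) (L : R) :
  (forall i j : 'I_n.+1, (i < j)%N -> x i < x j) ->
  (forall i j : 'I_n.+1, (i < j)%N -> xh i < xh j) ->
  xh ord0 = x ord0 -> xh ord_max = x ord_max ->
  0 <= L ->
  (forall j : 'I_n.+1, (0 < j)%N ->
     `|y j - y (inord j.-1)| <= L * (xh j - xh (inord j.-1))) ->
  forall k : 'I_n.+1, (0 < k)%N ->
    let z := zk x xh in
    let c := (xh (inord k.-1) + xh k) / 2 in
    let a := fun j : 'I_n.+1 => (z j - Pint xh z c) * lagr xh j c in
    `|Eerr xh y z c| <=
      L * \sum_(i < n.+1 | (0 < i)%N)
            (xh i - xh (inord i.-1)) * `|\sum_(j < n.+1 | (i <= j)%N) a j|.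
Proof.
move=> _ xh_incr _ _ _ dy_le k _ /=.
have xh_inj : injective xh.
  move=> i j xhij; apply/eqP; rewrite eq_le !leNgt.
  by apply/andP; split; apply/negP => /xh_incr; rewrite xhij ltxx.
rewrite Eerr_sum mulr_sumr.
under [X in _ <= X]eq_bigr do rewrite mulrA.
set z := zk x xh; set c := (_ + _) / 2.
apply: (@norm_sum_le_abel _ _ _ (fun j => (z j - Pint xh z c) * lagr xh j c)) => //.
exact: sum_residual_lagr.
Qed.
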